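(* Let $A\in\mathbb{R}^{n\times n}$, $B\in\mathbb{R}^n$ with $(A,B)$ controllable, $n\ge2$, and $\mathcal{C}=(B\;AB\;\cdots\;A^{n-1}B)$. For $k=1,\dots,n-1$ let $\mathrm{an}_k\in\mathbb{R}^{(n-k)\times(n-k+1)}$ have full row rank, with $\mathrm{an}_kB_{k-1}=0$, where $B_0=B$ and $B_k=\mathrm{an}_k\cdots\mathrm{an}_1A^kB$. Then $B_{n-1}$ is a nonzero real number and $$e_n^T\mathcal{C}^{-1}=\frac{1}{B_{n-1}}\,\mathrm{an}_{n-1}\mathrm{an}_{n-2}\cdots\mathrm{an}_2\mathrm{an}_1 .$$
   Context: $e_n$ is the $n$-th canonical basis vector of $\mathbb{R}^n$. *)

From HB Require Import structures.
From mathcomp Require Import all_boot all_order all_algebra.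
Set Implicit Arguments. Unset Strict Implicit. Unset Printing Implicit Defensive.
Import Order.TTheory GRing.Theory Num.Theory.
Local Open Scope ring_scope.

Section Defs.
Variables (R : fieldType) (n : nat).

Definition ctrb_mx (A : 'M[R]_n) (B : 'cV[R]_n) : 'M[R]_n :=
  \matrix_(i < n, j < n) (A ^+ j *m B) i 0.

Definition controllable (A : 'M[R]_n) (B : 'cV[R]_n) : Prop :=
  \rank (ctrb_mx A B) = n.

(* an k : 'M_(n-k, n-k+1), meaningful for 1 <= k <= n-1.
   an_prod an k = an_k * an_(k-1) * ... * an_1 : 'M_(n-k, n)  (an_prod an 0 = identity).
   conform_mx is only used to align dimensions that are (propositionally)
   equal for k < n; it then is the identity. *)
Fixpoint an_prod (an : forall k : nat, 'M[R]_(n - k, (n - k).+1)) (k : nat)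
  : 'M[R]_(n - k, n) :=
  match k with
  | 0 => conform_mx (0 : 'M[R]_(n - 0, n)) (1%:M : 'M[R]_n)
  | k'.+1 => an k'.+1 *m conform_mx (0 : 'M[R]_((n - k'.+1).+1, n)) (an_prod an k')
  end.

Definition Bseq (A : 'M[R]_n) (B : 'cV[R]_n)
  (an : forall k : nat, 'M[R]_(n - k, (n - k).+1)) (k : nat) : 'M[R]_(n - k, 1) :=
  an_prod an k *m (A ^+ k *m B).

Definition an_times_Bprev (A : 'M[R]_n) (B : 'cV[R]_n)
  (an : forall k : nat, 'M[R]_(n - k, (n - k).+1)) (k : nat) : 'M[R]_(n - k, 1) :=
  an k *m conform_mx (0 : 'M[R]_((n - k).+1, 1)) (Bseq A B an k.-1).

Definition Blast (A : 'M[R]_n) (B : 'cV[R]_n)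
  (an : forall k : nat, 'M[R]_(n - k, (n - k).+1)) : R :=
  (conform_mx (0 : 'M[R]_1) (Bseq A B an n.-1)) 0 0.

Definition an_full (an : forall k : nat, 'M[R]_(n - k, (n - k).+1)) : 'rV[R]_n :=
  conform_mx (0 : 'rV[R]_n) (an_prod an n.-1).

Definition e_last_row : 'rV[R]_n := \row_(j < n) ((j == n.-1 :> nat)%:R).

End Defs.

From HB Require Import structures.
From mathcomp Require Import all_boot all_order all_algebra.
From mathcomp Require Import zify.
Import Order.TTheory GRing.Theory Num.Theory.
Local Open Scope ring_scope.

Set Implicit Arguments.
Unset Strict Implicit.

(* The product P_k = an_k ... an_1 kills B, AB, ..., A^(k-1) B: the term A^(k-1) B
   is killed by an_k by hypothesis, the earlier ones already by P_(k-1). Hence the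
   row P_(n-1) multiplies the controllability matrix C to B_(n-1) e_n^T. Being a
   product of full-row-rank factors P_(n-1) is nonzero, so invertibility of C forces
   B_(n-1) != 0, and multiplying by C^-1 gives the formula. *)

Section MatrixFacts.
Variable R : fieldType.

Lemma conform_mxMl p p' q r (M : 'M[R]_(p, q)) (X : 'M[R]_(q, r)) : p = p' ->
  conform_mx (0 : 'M_(p', r)) (M *m X) = conform_mx (0 : 'M_(p', q)) M *m X.
Proof. by move=> Ep; subst; rewrite !conform_mx_id. Qed.

Lemma conform_mx0 p p' q q' :
  conform_mx (0 : 'M[R]_(p', q')) (0 : 'M[R]_(p, q)) = 0.
Proof.
have [Ep|Np] := eqVneq p p'; last by rewrite nonconform_mx // Np.
have [Eq|Nq] := eqVneq q q'; last by rewrite nonconform_mx // Nq orbT.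
by subst; rewrite conform_mx_id.
Qed.

Lemma mxrank_conform_mx p p' q q' (M : 'M[R]_(p, q)) : p = p' -> q = q' ->
  \rank (conform_mx (0 : 'M_(p', q')) M) = \rank M.
Proof. by move=> Ep Eq; subst; rewrite conform_mx_id. Qed.

Lemma mulmx_invmx_scale m (Q E : 'rV[R]_m) (C : 'M[R]_m) (b : R) :
  C \in unitmx -> b != 0 -> Q *m C = b *: E -> E *m invmx C = b^-1 *: Q.
Proof.
move=> Cu b_neq0 QC.
have -> : E = b^-1 *: (Q *m C) by rewrite QC scalerA mulVf // scale1r.
by rewrite -scalemxAl mulmxK.
Qed.

Lemma scale_neq0_of_mul_unitmx m (Q E : 'rV[R]_m) (C : 'M[R]_m) (b : R) :
  C \in unitmx -> Q != 0 -> Q *m C = b *: E -> b != 0.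
Proof.
move=> Cu Q_neq0 QC; apply: contraNneq Q_neq0 => b0.
by rewrite -(mulmxK Cu Q) QC b0 scale0r mul0mx.
Qed.

End MatrixFacts.

Section AnnihilatorChain.
Variables (R : fieldType) (n : nat) (A : 'M[R]_n) (B : 'cV[R]_n).
Variable an : forall k : nat, 'M[R]_(n - k, (n - k).+1).

Lemma an_prod_ctrb_col0 :
  (forall k, (1 <= k <= n.-1)%N -> an_times_Bprev A B an k = 0) ->
  forall k j, (k <= n.-1)%N -> (j < k)%N -> an_prod an k *m (A ^+ j *m B) = 0.
Proof.
move=> an_B0; elim=> [//|k IHk] j le_k_n.
have Enk : (n - k = (n - k.+1).+1)%N by lia.
rewrite ltnS leq_eqVlt => /orP[/eqP-> | lt_j_k] /=; rewrite -mulmxA -conform_mxMl //.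
  by apply: an_B0; rewrite le_k_n.
by rewrite IHk ?(ltnW le_k_n) // conform_mx0 mulmx0.
Qed.

Lemma row_free_an_prod :
  (forall k, (1 <= k <= n.-1)%N -> row_free (an k)) ->
  forall k, (k <= n.-1)%N -> row_free (an_prod an k).
Proof.
move=> an_free; elim=> [_ | k IHk le_k_n].
  by rewrite /row_free /= mxrank_conform_mx ?mxrank1 ?subn0.
have Enk : (n - k = (n - k.+1).+1)%N by lia.
rewrite /row_free /= mxrankMfree; first by apply: an_free; rewrite le_k_n.
by move: (IHk (ltnW le_k_n)); rewrite /row_free mxrank_conform_mx // -Enk.
Qed.

Lemma mulmx_ctrb_mx (v : 'rV[R]_n) (j : 'I_n) :
  (v *m ctrb_mx A B) 0 j = (v *m (A ^+ j *m B)) 0 0.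
Proof. by rewrite !mxE; apply: eq_bigr => k _; rewrite mxE. Qed.

Lemma an_full_mul_ctrb_mx :
  (forall k, (1 <= k <= n.-1)%N -> an_times_Bprev A B an k = 0) ->
  an_full an *m ctrb_mx A B = Blast A B an *: e_last_row R n.
Proof.
move=> an_B0; apply/matrixP => i j; have := ltn_ord j => lt_j_n.
rewrite (ord1 i) mulmx_ctrb_mx /an_full -conform_mxMl; last by lia.
rewrite [RHS]mxE [e_last_row _ _ _ _]mxE.
have [lt_j_n1 | le_n1_j] := ltnP j n.-1.
  rewrite an_prod_ctrb_col0 // conform_mx0 mxE.
  by rewrite (_ : (j == n.-1 :> nat) = false) ?mulr0 //; apply/eqP; lia.
have Ej : (j : nat) = n.-1 by lia.
by rewrite Ej eqxx mulr1.
Qed.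

Lemma an_full_neq0 :
  (0 < n)%N -> (forall k, (1 <= k <= n.-1)%N -> row_free (an k)) ->
  an_full an != 0.
Proof.
move=> n_gt0 an_free.
have rank_Q : \rank (an_full an) = 1%N.
  rewrite /an_full mxrank_conform_mx //; last by lia.
  by have /eqP -> := row_free_an_prod an_free (leqnn n.-1); lia.
by rewrite -mxrank_eq0 rank_Q.
Qed.

End AnnihilatorChain.

Unset Implicit Arguments.

Theorem mainTheorem13 (R : realFieldType) (n : nat) (hn : (2 <= n)%N)
  (A : 'M[R]_n) (B : 'cV[R]_n)
  (an : forall k : nat, 'M[R]_(n - k, (n - k).+1)) :
  controllable A B ->
  (forall k : nat, (1 <= k <= n.-1)%N -> row_free (an k)) ->
  (forall k : nat, (1 <= k <= n.-1)%N -> an_times_Bprev A B an k = 0) ->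
  Blast A B an != 0 /\
  e_last_row R n *m invmx (ctrb_mx A B) = (Blast A B an)^-1 *: an_full an.
Proof.
move=> ctrlAB an_free an_B0.
have C_unit : ctrb_mx A B \in unitmx by rewrite -row_free_unit /row_free ctrlAB.
have QC := an_full_mul_ctrb_mx an_B0.
have Q_neq0 := an_full_neq0 (ltnW hn) an_free.
have b_neq0 := scale_neq0_of_mul_unitmx C_unit Q_neq0 QC.
by split; last exact: mulmx_invmx_scale.
Qed.
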